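(* Let $\mathfrak{g}$ be a Leibniz algebra such that $\mathcal{M}^{\mathrm{Lie}}(\mathfrak{g})$ is finite-dimensional, and let $0\to\mathfrak{r}\to\mathfrak{f}\xrightarrow{\rho}\mathfrak{g}\to0$ be a free presentation of $\mathfrak{g}$. Then an extension $0\to\mathfrak{m}\to\mathfrak{p}\xrightarrow{\psi}\mathfrak{g}\to0$ is a $\mathrm{Lie}$-stem cover if and only if there exists a two-sided ideal $\mathfrak{s}$ of $\mathfrak{f}$ with $[\mathfrak{f},\mathfrak{r}]_{\mathrm{Lie}}\subseteq\mathfrak{s}\subseteq\mathfrak{r}$ such that (a) $\mathfrak{p}\cong\mathfrak{f}/\mathfrak{s}$ and $\mathfrak{m}\cong\mathfrak{r}/\mathfrak{s}$; (b) $\frac{\mathfrak{r}}{[\mathfrak{f},\mathfrak{r}]_{\mathrm{Lie}}}$ is the direct sum of $\mathcal{M}^{\mathrm{Lie}}(\mathfrak{g})=\frac{\mathfrak{r}\cap[\mathfrak{f},\mathfrak{f}]_{\mathrm{Lie}}}{[\mathfrak{f},\mathfrak{r}]_{\mathrm{Lie}}}$ and $\frac{\mathfrak{s}}{[\mathfrak{f},\mathfrak{r}]_{\mathrm{Lie}}}$.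
   Context: Fix a field $\mathbb{K}$ with $\frac12\in\mathbb{K}$. A Leibniz algebra is a $\mathbb{K}$-vector space with a bilinear bracket satisfying $[x,[y,z]]=[[x,y],z]-[[x,z],y]$. $\mathfrak{p}^{\mathrm{ann}}$ is the span of all $[x,x]$ and $\mathfrak{p}_{\mathrm{Lie}}=\mathfrak{p}/\mathfrak{p}^{\mathrm{ann}}$. For two-sided ideals $\mathfrak{m},\mathfrak{n}$, $[\mathfrak{m},\mathfrak{n}]_{\mathrm{Lie}}$ is the span of all $[m,n]+[n,m]$. $Z_{\mathrm{Lie}}(\mathfrak{p})=\{z:[x,z]+[z,x]=0\ \forall x\}$. An extension $0\to\mathfrak{m}\to\mathfrak{p}\to\mathfrak{g}\to0$ is $\mathrm{Lie}$-central if $\mathfrak{m}\subseteq Z_{\mathrm{Lie}}(\mathfrak{p})$; it is a $\mathrm{Lie}$-stem extension if moreover the induced map $\mathfrak{p}_{\mathrm{Lie}}\to\mathfrak{g}_{\mathrm{Lie}}$ is an isomorphism (equivalently $\mathfrak{m}\subseteq\mathfrak{p}^{\mathrm{ann}}$); it is a $\mathrm{Lie}$-stem cover if moreover the induced map $\mathcal{M}^{\mathrm{Lie}}(\mathfrak{p})\to\mathcal{M}^{\mathrm{Lie}}(\mathfrak{g})$ is zero. For a free presentation $0\to\mathfrak{r}\to\mathfrak{f}\to\mathfrak{g}\to0$ ($\mathfrak{f}$ free Leibniz), $\mathcal{M}^{\mathrm{Lie}}(\mathfrak{g})=\frac{\mathfrak{r}\cap[\mathfrak{f},\mathfrak{f}]_{\mathrm{Lie}}}{[\mathfrak{f},\mathfrak{r}]_{\mathrm{Lie}}}$,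 independent of the presentation up to isomorphism. *)

From HB Require Import structures.
From mathcomp Require Import all_boot all_order all_algebra.
Set Implicit Arguments. Unset Strict Implicit. Unset Printing Implicit Defensive.
Import GRing.Theory.
Local Open Scope ring_scope.

Record leibniz (K : fieldType) := Leibniz {
  lcar :> lmodType K;
  lbr : lcar -> lcar -> lcar;
  lbr_linl : forall (a : K) (x y z : lcar), lbr (a *: x + y) z = a *: lbr x z + lbr y z;
  lbr_linr : forall (a : K) (x y z : lcar), lbr z (a *: x + y) = a *: lbr z x + lbr z y;
  lbr_leibniz : forall x y z : lcar, lbr x (lbr y z) = lbr (lbr x y) z - lbr (lbr x z) y
}.
Arguments lbr {K} l _ _.

Section Defs.
Variable K : fieldType.

Definition subset_of (V : Type) (A B : V -> Prop) := forall x, A x -> B x.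

Definition subspace (V : lmodType K) (S : V -> Prop) :=
  S 0 /\ (forall (a : K) x y, S x -> S y -> S (a *: x + y)).

Definition span (V : lmodType K) (A : V -> Prop) : V -> Prop :=
  fun x => forall S, subspace S -> subset_of A S -> S x.

Definition ideal (L : leibniz K) (I : L -> Prop) :=
  subspace I /\ forall x y, (I x \/ I y) -> I (lbr L x y).

Definition ann (L : leibniz K) : L -> Prop :=
  span (fun z => exists x, z = lbr L x x).

Definition lie_comm (L : leibniz K) (M N : L -> Prop) : L -> Prop :=
  span (fun z => exists m n, M m /\ N n /\ z = lbr L m n + lbr L n m).

Definition lie_center (L : leibniz K) : L -> Prop :=
  fun z => forall x, lbr L x z + lbr L z x = 0.

Definition full (V : Type) : V -> Prop := fun _ => True.

Definition is_hom (L1 L2 : leibniz K) (phi : L1 -> L2) :=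
  (forall (a : K) x y, phi (a *: x + y) = a *: phi x + phi y) /\
  (forall x y, phi (lbr L1 x y) = lbr L2 (phi x) (phi y)).

Definition kernel (L1 L2 : leibniz K) (phi : L1 -> L2) : L1 -> Prop :=
  fun x => phi x = 0.

Definition is_free (F : leibniz K) :=
  exists (X : Type) (j : X -> F),
    forall (L : leibniz K) (h : X -> L),
      exists phi : F -> L, is_hom phi /\ (forall x, phi (j x) = h x) /\
        forall phi' : F -> L, is_hom phi' -> (forall x, phi' (j x) = h x) ->
          forall y, phi' y = phi y.

Definition free_presentation (F G : leibniz K) (rho : F -> G) :=
  is_free F /\ is_hom rho /\ (forall y, exists x, rho x = y).

Definition is_extension (M P G : leibniz K) (i : M -> P) (psi : P -> G) :=
  is_hom i /\ is_hom psi /\ (forall x y, i x = i y -> x = y) /\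
  (forall z, exists y, psi y = z) /\
  (forall y, psi y = 0 <-> exists x, y = i x).

Definition lie_central_ext (M P G : leibniz K) (i : M -> P) (psi : P -> G) :=
  is_extension i psi /\ forall x, lie_center (i x).

(* Lie-stem extension, in the equivalent form m \subseteq p^ann. *)
Definition lie_stem_ext (M P G : leibniz K) (i : M -> P) (psi : P -> G) :=
  lie_central_ext i psi /\ forall x, ann (i x).

(* M^Lie(G) = (R \cap [F,F]_Lie) / [F,R]_Lie for a presentation rho : F -> G
   with R = ker rho: numerator and denominator as subsets of F. *)
Definition schur_num (F G : leibniz K) (rho : F -> G) : F -> Prop :=
  fun x => kernel rho x /\ lie_comm (@full F) (@full F) x.
Definition schur_den (F G : leibniz K) (rho : F -> G) : F -> Prop :=
  lie_comm (@full F) (kernel rho).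

(* The map M^Lie(P) -> M^Lie(G) induced by psi is zero: for any free
   presentations rho' : F' -> P, rho : F -> G and any lift beta : F' -> F
   of psi (rho o beta = psi o rho'), beta maps R' \cap [F',F']_Lie into
   [F,R]_Lie. *)
Definition induced_schur_zero (P G : leibniz K) (psi : P -> G) :=
  forall (F' F : leibniz K) (rho' : F' -> P) (rho : F -> G) (beta : F' -> F),
    free_presentation rho' -> free_presentation rho -> is_hom beta ->
    (forall x, rho (beta x) = psi (rho' x)) ->
    forall x, schur_num rho' x -> schur_den rho (beta x).

Definition lie_stem_cover (M P G : leibniz K) (i : M -> P) (psi : P -> G) :=
  lie_stem_ext i psi /\ induced_schur_zero psi.

Definition fin_dim_quot (V : lmodType K) (A B : V -> Prop) :=
  exists vs : seq V, (forall k, (k < size vs)%N -> A (nth 0 vs k)) /\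
    forall x, A x -> exists (c : nat -> K) y, B y /\
      x = \sum_(k < size vs) c k *: nth 0 vs k + y.
End Defs.

From Pilot Require Import Defs.
From mathcomp Require Import all_boot all_order all_algebra.
From Stdlib Require Import ClassicalEpsilon.
Import GRing.Theory.
Local Open Scope ring_scope.
Set Implicit Arguments. Unset Strict Implicit.

(* Since F is free, rho lifts along psi to theta : F -> P, and the ideal is S = ker theta.
   As 2 is invertible, p^ann = [P,P]_Lie; modulo the Lie-central ideal m it is the image
   of [F,F]_Lie, which makes theta onto and gives the sum in (b), while
   [F,R]_Lie \subseteq S is the Lie-centrality of m. The intersection in (b) is the
   vanishing of M^Lie(P) -> M^Lie(G) on the presentation theta of P. Conversely, a lift
   of psi between free presentations agrees modulo [F'',R'']_Lie with one factoring
   through theta, and (b) makes that one kill M^Lie(P). *)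

Section Subspaces.
Variables (K : fieldType) (V : lmodType K).
Implicit Types (A S : V -> Prop).

Lemma subspaceD S : subspace S -> forall x y, S x -> S y -> S (x + y).
Proof. by move=> [_ S_lin] x y Sx Sy; have := S_lin 1 x y Sx Sy; rewrite scale1r. Qed.

Lemma subspaceZ S : subspace S -> forall a x, S x -> S (a *: x).
Proof. by move=> [S0 S_lin] a x Sx; have := S_lin a x 0 Sx S0; rewrite addr0. Qed.

Lemma subspaceB S : subspace S -> forall x y, S x -> S y -> S (x - y).
Proof.
by move=> S_sub x y Sx Sy; apply: subspaceD => //; rewrite -scaleN1r; apply: subspaceZ.
Qed.

Lemma span_subspace A : subspace (Defs.span A).
Proof.
split=> [S [S0 _] _ // | a x y Ax Ay S S_sub AS].
by apply: (proj2 S_sub); [apply: Ax | apply: Ay].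
Qed.

Lemma mem_span A x : A x -> Defs.span A x.
Proof. by move=> Ax S _; apply. Qed.

Lemma span_min A S : subspace S -> subset_of A S -> subset_of (Defs.span A) S.
Proof. by move=> S_sub AS x; apply. Qed.

End Subspaces.

Section LinearMaps.
Variables (K : fieldType) (V W : lmodType K) (f : V -> W).
Hypothesis f_lin : linear f.

Lemma linear_funB x y : f (x - y) = f x - f y.
Proof. exact: zmod_morphism_linear. Qed.

Lemma linear_fun0 : f 0 = 0.
Proof. by rewrite -(subrr 0) linear_funB subrr. Qed.

Lemma linear_funD x y : f (x + y) = f x + f y.
Proof. by have := f_lin 1 x y; rewrite !scale1r. Qed.

Lemma linear_funBf (g : V -> W) : linear g -> linear (fun x => f x - g x).
Proof. by move=> g_lin a x y; rewrite f_lin g_lin scalerBr opprD addrACA. Qed.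

Lemma subspace_preimage (T : W -> Prop) : subspace T -> subspace (fun x => T (f x)).
Proof.
move=> T_sub; split=> [|a x y Tx Ty]; first by rewrite linear_fun0; apply: (proj1 T_sub).
by rewrite f_lin; apply: (proj2 T_sub).
Qed.

Lemma span_image (A : V -> Prop) (T : W -> Prop) : subspace T ->
  (forall a, A a -> T (f a)) -> subset_of (Defs.span A) (fun x => T (f x)).
Proof. by move=> T_sub AT; apply: span_min => //; apply: subspace_preimage. Qed.

End LinearMaps.

Section LeibnizAlgebra.
Variables (K : fieldType) (L : leibniz K).
Implicit Types x y z : L.

Definition lie_sym x y := lbr L x y + lbr L y x.

Lemma lbrl_linear z : linear (lbr L ^~ z).
Proof. by move=> a x y; apply: lbr_linl. Qed.

Lemma lbrr_linear z : linear (lbr L z).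
Proof. by move=> a x y; apply: lbr_linr. Qed.

Lemma lbr0l z : lbr L 0 z = 0. Proof. exact: linear_fun0 (lbrl_linear z). Qed.
Lemma lbr0r z : lbr L z 0 = 0. Proof. exact: linear_fun0 (lbrr_linear z). Qed.
Lemma lbrDl x y z : lbr L (x + y) z = lbr L x z + lbr L y z.
Proof. exact: (linear_funD (lbrl_linear z) x y). Qed.
Lemma lbrDr x y z : lbr L z (x + y) = lbr L z x + lbr L z y.
Proof. exact: (linear_funD (lbrr_linear z) x y). Qed.
Lemma lbrBl x y z : lbr L (x - y) z = lbr L x z - lbr L y z.
Proof. exact: (linear_funB (lbrl_linear z) x y). Qed.
Lemma lbrBr x y z : lbr L z (x - y) = lbr L z x - lbr L z y.
Proof. exact: (linear_funB (lbrr_linear z) x y). Qed.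

Lemma lie_symC x y : lie_sym x y = lie_sym y x.
Proof. exact: addrC. Qed.

Lemma lie_symBl x y z : lie_sym (x - y) z = lie_sym x z - lie_sym y z.
Proof. by rewrite /lie_sym lbrBl lbrBr opprD addrACA. Qed.

Lemma lie_symBr x y z : lie_sym z (x - y) = lie_sym z x - lie_sym z y.
Proof. by rewrite !(lie_symC z) lie_symBl. Qed.

Lemma lie_sym_sub x1 x2 y1 y2 :
  lie_sym x1 x2 - lie_sym y1 y2 = lie_sym (x1 - y1) x2 + lie_sym y1 (x2 - y2).
Proof. by rewrite lie_symBl lie_symBr subrKA. Qed.

Lemma lie_sym_ann x y : @ann K L (lie_sym x y).
Proof.
have -> : lie_sym x y = lbr L (x + y) (x + y) - (lbr L x x + lbr L y y).
  by rewrite lbrDl !lbrDr [lbr L x x + _]addrC addrACA addrK.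
have ann_sub := span_subspace (fun z => exists x, z = lbr L x x).
apply: (subspaceB ann_sub); first by apply: mem_span; exists (x + y).
by apply: (subspaceD ann_sub); apply: mem_span; [exists x | exists y].
Qed.

Lemma lie_comm_full_sub_ann : subset_of (lie_comm (@full L) (@full L)) (@ann K L).
Proof.
by apply: span_min; [apply: span_subspace | move=> _ [m [n [_ [_ ->]]]]; apply: lie_sym_ann].
Qed.

Section TwoUnit.
Hypothesis two_unit : (2%:R : K) != 0.

Lemma scale_half_double (v : L) : (2%:R^-1 : K) *: (v + v) = v.
Proof. by rewrite -mulr2n -scaler_nat scalerA mulVf // scale1r. Qed.

Lemma ann_sub_lie_comm_full : subset_of (@ann K L) (lie_comm (@full L) (@full L)).
Proof.
apply: span_min => [|_ [x ->]]; first exact: span_subspace.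
rewrite -[lbr L x x]scale_half_double; apply: (subspaceZ (span_subspace _)).
by apply: mem_span; exists x, x.
Qed.

Lemma lie_center_lbr_self z : lie_center z -> lbr L z z = 0.
Proof. by move=> z_central; rewrite -[lbr L z z]scale_half_double z_central scaler0. Qed.

End TwoUnit.
End LeibnizAlgebra.

Section Homomorphisms.
Variable K : fieldType.

Lemma hom_comp (A B C : leibniz K) (f : A -> B) (g : B -> C) :
  is_hom f -> is_hom g -> is_hom (fun x => g (f x)).
Proof.
move=> [f_lin f_br] [g_lin g_br].
by split=> [a x y | x y]; rewrite ?f_lin ?g_lin ?f_br ?g_br.
Qed.

Lemma hom_lie_sym (A B : leibniz K) (f : A -> B) x y :
  is_hom f -> f (lie_sym x y) = lie_sym (f x) (f y).
Proof. by move=> [f_lin f_br]; rewrite /lie_sym linear_funD // !f_br. Qed.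

Lemma kernel_ideal (A B : leibniz K) (f : A -> B) : is_hom f -> ideal (kernel f).
Proof.
move=> [f_lin f_br]; split.
  apply: (subspace_preimage f_lin (T := eq^~ 0)).
  by split=> // a _ _ -> ->; rewrite scaler0 addr0.
by move=> x y [fx0 | fy0]; rewrite /kernel f_br ?fx0 ?fy0 ?lbr0l ?lbr0r.
Qed.

Lemma lie_comm_image (A B : leibniz K) (f : A -> B) (X Y : A -> Prop) (X' Y' : B -> Prop) :
  is_hom f -> (forall x, X x -> X' (f x)) -> (forall y, Y y -> Y' (f y)) ->
  subset_of (lie_comm X Y) (fun z => lie_comm X' Y' (f z)).
Proof.
move=> f_hom XX' YY'; apply: (span_image (proj1 f_hom) (span_subspace _)).
move=> _ [m [n [Xm [Yn ->]]]]; apply: mem_span; exists (f m), (f n).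
by split; [exact: XX' | split; [exact: YY' | exact: hom_lie_sym]].
Qed.

(* By [lie_sym_sub], the difference of the images of a symmetrized bracket is a sum
   of symmetrized brackets with one argument of the form f z - g z, which lies in R. *)
Lemma hom_diff_lie_comm (A C D : leibniz K) (f g : A -> C) (rho : C -> D) :
  is_hom f -> is_hom g -> linear rho -> (forall x, rho (f x) = rho (g x)) ->
  subset_of (lie_comm (@full A) (@full A))
            (fun x => lie_comm (@full C) (kernel rho) (f x - g x)).
Proof.
move=> f_hom g_hom rho_lin fg_rho.
have fg_R x : kernel rho (f x - g x) by rewrite /kernel linear_funB // fg_rho subrr.
apply: (span_image (linear_funBf (proj1 f_hom) (proj1 g_hom)) (span_subspace _)).
move=> _ [x [y [_ [_ ->]]]] /=; rewrite -/(lie_sym x y).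
rewrite (hom_lie_sym x y f_hom) (hom_lie_sym x y g_hom) lie_sym_sub.
apply: (subspaceD (span_subspace _)); apply: mem_span.
- by exists (f y), (f x - g x); rewrite lie_symC.
- by exists (g x), (f y - g y).
Qed.

Lemma free_lift (F G P : leibniz K) (f : F -> G) (psi : P -> G) :
  is_free F -> is_hom f -> is_hom psi -> (forall z, exists y, psi y = z) ->
  exists theta : F -> P, is_hom theta /\ forall x, psi (theta x) = f x.
Proof.
move=> [X [j F_univ]] f_hom psi_hom psi_surj.
have [h psi_h] : exists h : X -> P, forall x, psi (h x) = f (j x).
  exists (fun x => proj1_sig (constructive_indefinite_description _ (psi_surj (f (j x))))).
  by move=> x; case: constructive_indefinite_description.
have [theta [theta_hom [theta_j _]]] := F_univ P h.
have [phi [_ [_ phi_unique]]] := F_univ G (fun x => f (j x)).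
exists theta; split=> // x.
rewrite (phi_unique _ (hom_comp theta_hom psi_hom)) => [|y]; last by rewrite theta_j.
by rewrite (phi_unique f).
Qed.

End Homomorphisms.

Section StemIdeal.
Variables (K : fieldType) (G F M P : leibniz K).
Variables (rho : F -> G) (i : M -> P) (psi : P -> G) (S : F -> Prop).

Definition quotient_extension :=
  exists theta : F -> P,
    is_hom theta /\ (forall y, exists x, theta x = y) /\
    (forall x, theta x = 0 <-> S x) /\
    (forall x, psi (theta x) = rho x) /\
    (forall m, exists x, kernel rho x /\ theta x = i m).

Definition schur_complement :=
  (forall x, kernel rho x -> exists a b, schur_num rho a /\ S b /\ x = a + b) /\
  (forall x, schur_num rho x -> S x -> schur_den rho x).

Definition lie_stem_ideal :=
  ideal S /\ subset_of (schur_den rho) S /\ subset_of S (kernel rho) /\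
  quotient_extension /\ schur_complement.

End StemIdeal.

Section StemCoverToIdeal.
Variables (K : fieldType) (G F M P : leibniz K).
Variables (rho : F -> G) (i : M -> P) (psi : P -> G) (theta : F -> P).
Hypothesis two_unit : (2%:R : K) != 0.
Hypothesis pres : free_presentation rho.
Hypotheses (psi_lin : linear psi) (psi_kernel : forall y, psi y = 0 <-> exists m, y = i m).
Hypotheses (theta_hom : is_hom theta) (psi_theta : forall x, psi (theta x) = rho x).
Hypotheses (i_central : forall m, lie_center (i m)) (i_ann : forall m, ann (i m)).

Lemma lift_decomp q : exists x m, q = theta x + i m.
Proof.
have [x rho_x] := pres.2.2 (psi q).
have /psi_kernel [m q_m] : psi (q - theta x) = 0.
  by rewrite linear_funB // psi_theta rho_x subrr.
by exists x, m; rewrite -q_m addrC subrK.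
Qed.

Lemma lift_kernel_ext x : kernel rho x -> exists m, theta x = i m.
Proof. by move=> rho_x; apply/psi_kernel; rewrite psi_theta. Qed.

(* Since i(M) is Lie-central, [theta x + i m, theta x + i m] = theta [x, x]. *)
Lemma ann_lift p : ann p -> exists f, lie_comm (@full F) (@full F) f /\ theta f = p.
Proof.
have [theta_lin theta_br] := theta_hom.
pose T q := exists f, lie_comm (@full F) (@full F) f /\ theta f = q.
have T_sub : subspace T.
  split=> [|a _ _ [f1 [f1_comm <-]] [f2 [f2_comm <-]]].
    by exists 0; split; [apply: (proj1 (span_subspace _)) | apply: linear_fun0].
  by exists (a *: f1 + f2); split; [apply: (proj2 (span_subspace _)) | apply: theta_lin].
move: p; apply: (span_min T_sub) => _ [q ->].
have [x [m ->]] := lift_decomp q.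
exists (lbr F x x); split; first by apply: ann_sub_lie_comm_full => //; apply: mem_span; exists x.
rewrite theta_br lbrDl !lbrDr (lie_center_lbr_self two_unit (i_central m)) addr0.
by rewrite -addrA i_central addr0.
Qed.

Lemma lift_surj y : exists x, theta x = y.
Proof.
have [x [m ->]] := lift_decomp y; have [f [_ theta_f]] := ann_lift (i_ann m).
by exists (x + f); rewrite linear_funD ?theta_f //; case: theta_hom.
Qed.

Lemma schur_den_sub_lift_kernel : subset_of (schur_den rho) (kernel theta).
Proof.
apply: (span_min (kernel_ideal theta_hom).1) => _ [y [x [_ [rho_x ->]]]].
have [m theta_x] := lift_kernel_ext rho_x.
by rewrite /kernel -/(lie_sym y x) hom_lie_sym // theta_x; apply: i_central.
Qed.

Lemma lift_kernel_sub : subset_of (kernel theta) (kernel rho).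
Proof. by move=> x theta_x; rewrite /kernel -psi_theta theta_x linear_fun0. Qed.

Lemma kernel_decomp x : kernel rho x ->
  exists a b, schur_num rho a /\ kernel theta b /\ x = a + b.
Proof.
move=> rho_x; have [m theta_x] := lift_kernel_ext rho_x.
have [f [f_comm theta_f]] := ann_lift (i_ann m).
have theta_lin := proj1 theta_hom.
exists f, (x - f); do !split=> //; last by rewrite subrKC.
- by rewrite /kernel -psi_theta theta_f; apply/psi_kernel; exists m.
- by rewrite /kernel linear_funB // theta_x theta_f subrr.
Qed.

(* theta is itself a free presentation of P, lifted along the identity of F. *)
Lemma lift_kernel_schur_zero : induced_schur_zero psi ->
  forall x, schur_num rho x -> kernel theta x -> schur_den rho x.
Proof.
move=> schur_zero x [_ x_comm] theta_x.
have theta_pres : free_presentation theta := conj pres.1 (conj theta_hom lift_surj).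
have id_hom : is_hom (@id F) by [].
exact: (schur_zero _ _ _ _ _ theta_pres pres id_hom (fun y => esym (psi_theta y)) x).
Qed.

Lemma lift_kernel_lie_stem_ideal : induced_schur_zero psi ->
  lie_stem_ideal rho i psi (kernel theta).
Proof.
move=> schur_zero; split; first exact: kernel_ideal.
split; first exact: schur_den_sub_lift_kernel.
split; first exact: lift_kernel_sub.
split; last by split; [apply: kernel_decomp | apply: lift_kernel_schur_zero].
exists theta; do 2!split=> //; first exact: lift_surj.
do 2!split=> //; move=> m.
have [x theta_x] := lift_surj (i m); exists x; split=> //.
by rewrite /kernel -psi_theta theta_x; apply/psi_kernel; exists m.
Qed.

End StemCoverToIdeal.

Section IdealToStemCover.
Variables (K : fieldType) (G F M P : leibniz K).
Variables (rho : F -> G) (i : M -> P) (psi : P -> G).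
Variables (theta : F -> P) (S : F -> Prop).
Hypothesis pres : free_presentation rho.
Hypothesis psi_lin : linear psi.
Hypotheses (theta_hom : is_hom theta) (theta_surj : forall y, exists x, theta x = y).
Hypothesis theta_kernel : forall x, theta x = 0 <-> S x.
Hypothesis psi_theta : forall x, psi (theta x) = rho x.
Hypothesis i_lift : forall m, exists x, kernel rho x /\ theta x = i m.
Hypothesis schur_den_sub : subset_of (schur_den rho) S.
Hypothesis compl : schur_complement rho S.

Lemma lift_kernel_central x : kernel rho x -> lie_center (theta x).
Proof.
move=> rho_x y; have [f <-] := theta_surj y.
rewrite -/(lie_sym _ _) -hom_lie_sym //; apply/theta_kernel/schur_den_sub.
by apply: mem_span; exists f, x.
Qed.

Lemma ext_lie_central m : lie_center (i m).
Proof. by have [x [rho_x <-]] := i_lift m; apply: lift_kernel_central. Qed.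

(* By (b), i m = theta a with a in [F,F]_Lie, whose image lies in [P,P]_Lie = ann P. *)
Lemma ext_ann m : ann (i m).
Proof.
have [x [rho_x <-]] := i_lift m.
have [a [b [[_ a_comm] [Sb ->]]]] := compl.1 x rho_x.
have [theta_lin _] := theta_hom.
rewrite linear_funD // (proj2 (theta_kernel b) Sb) addr0.
apply: lie_comm_full_sub_ann.
by apply: (lie_comm_image theta_hom _ _ a_comm).
Qed.

(* On [F',F']_Lie, beta agrees modulo [F'',R'']_Lie with del o gam, where gam lifts rho'
   through theta; gam sends R' \cap [F',F']_Lie into S \cap R \cap [F,F]_Lie = [F,R]_Lie. *)
Lemma ideal_schur_zero : induced_schur_zero psi.
Proof.
move=> F' F'' rho' rho'' beta [F'_free [rho'_hom _]] [_ [rho''_hom rho''_surj]].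
move=> beta_hom beta_rho x [rho'_x x_comm].
have [gam [gam_hom theta_gam]] := free_lift F'_free rho'_hom theta_hom theta_surj.
have [del [del_hom rho''_del]] := free_lift pres.1 pres.2.1 rho''_hom rho''_surj.
have gam_x : schur_den rho (gam x).
  apply: compl.2; last by apply/theta_kernel; rewrite theta_gam.
  split; first by rewrite /kernel -psi_theta theta_gam rho'_x linear_fun0.
  by apply: (lie_comm_image gam_hom _ _ x_comm).
have del_gam_x : schur_den rho'' (del (gam x)).
  apply: (lie_comm_image del_hom _ _ gam_x) => // y rho_y.
  by rewrite /kernel rho''_del.
have beta_del_gam : forall y, rho'' (beta y) = rho'' (del (gam y)).
  by move=> y; rewrite beta_rho rho''_del -psi_theta theta_gam.
have beta_x := hom_diff_lie_comm beta_hom (hom_comp gam_hom del_hom) rho''_hom.1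
  beta_del_gam x_comm.
by rewrite -(subrK (del (gam x)) (beta x)); apply: (subspaceD (span_subspace _)).
Qed.

End IdealToStemCover.

Lemma ideal_lie_stem_cover (K : fieldType) (G F M P : leibniz K)
    (rho : F -> G) (i : M -> P) (psi : P -> G) (S : F -> Prop) :
  free_presentation rho -> is_extension i psi -> subset_of (schur_den rho) S ->
  quotient_extension rho i psi S -> schur_complement rho S -> lie_stem_cover i psi.
Proof.
move=> pres ext den_S [theta [theta_hom [theta_surj [theta_kernel [psi_theta i_lift]]]]] compl.
have psi_lin : linear psi := ext.2.1.1.
split; last exact: (ideal_schur_zero pres psi_lin theta_hom theta_surj).
split; first split=> //.
- exact: (ext_lie_central theta_hom theta_surj theta_kernel i_lift den_S).
- exact: (ext_ann theta_hom theta_kernel i_lift compl).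
Qed.

Lemma lie_stem_cover_ideal (K : fieldType) (G F M P : leibniz K)
    (rho : F -> G) (i : M -> P) (psi : P -> G) :
  (2%:R : K) != 0 -> free_presentation rho -> is_extension i psi ->
  lie_stem_cover i psi -> exists S, lie_stem_ideal rho i psi S.
Proof.
move=> two_unit pres [_ [psi_hom [_ [psi_surj psi_kernel]]]] [[[_ i_central] i_ann] schur_zero].
have [theta [theta_hom psi_theta]] := free_lift pres.1 pres.2.1 psi_hom psi_surj.
exists (kernel theta).
exact: (lift_kernel_lie_stem_ideal two_unit pres psi_hom.1 psi_kernel theta_hom psi_theta).
Qed.

(* fdM is deliberately unused: neither direction needs a dimension count. *)
Theorem mainTheorem12 (K : fieldType) (two_unit : (2%:R : K) != 0)
  (G F : leibniz K) (rho : F -> G)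
  (pres : free_presentation rho)
  (fdM : fin_dim_quot (schur_num rho) (schur_den rho))
  (M P : leibniz K) (i : M -> P) (psi : P -> G)
  (ext : is_extension i psi) :
  lie_stem_cover i psi <->
  exists S : F -> Prop,
    ideal S /\
    subset_of (schur_den rho) S /\ subset_of S (kernel rho) /\
    (* (a) P ~ F/S and M ~ R/S, compatibly with the extensions *)
    (exists theta : F -> P,
       is_hom theta /\ (forall y, exists x, theta x = y) /\
       (forall x, theta x = 0 <-> S x) /\
       (forall x, psi (theta x) = rho x) /\
       (forall m, exists x, kernel rho x /\ theta x = i m)) /\
    (* (b) R/[F,R]_Lie = M^Lie(G) (+) S/[F,R]_Lie *)
    (forall x, kernel rho x ->
       exists a b, schur_num rho a /\ S b /\ x = a + b) /\
    (forall x, schur_num rho x -> S x -> schur_den rho x).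
Proof.
split; first exact: lie_stem_cover_ideal.
by move=> [S [_ [den_S [_ [quot compl]]]]]; apply: (ideal_lie_stem_cover pres ext den_S quot).
Qed.
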